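(* Let $N>1$ be an integer, let $a<b$ be real numbers, and let $\mathcal{X}=(x_1,\dots,x_N)$ be a finite list of $N$ real numbers in $[a,b]$ with mean $\mu=\frac{1}{N}\sum_{i=1}^N x_i$. Let $0<\epsilon<1$ and $0<\delta<1$, and put $$u=\frac{\log(1/\delta)}{2}\cdot\frac{(b-a)^2}{\epsilon^2}.$$ Let $m$ be an integer with $1\le m<N$ and $$m\ \ge\ \min\left\{\frac{u+1}{1+\frac{u}{N}},\ \frac{u+\frac{u}{N}}{1+\frac{u}{N}}\right\}.$$ Let $(X_1,\dots,X_m)$ be a sample of size $m$ drawn uniformly at random without replacement from $\mathcal{X}$. Then $$\mathbb{P}\left[\frac{1}{m}\sum_{t=1}^m X_t-\mu\le \epsilon\right]\ \ge\ 1-\delta .$$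
   Context: Sampling without replacement from the list $\mathcal{X}$ means choosing $m$ distinct indices uniformly at random from $\{1,\dots,N\}$, in order, and setting $X_t$ to be the entry of $\mathcal{X}$ at the $t$-th chosen index. *)

From Stdlib Require Import Reals.
From mathcomp Require Import all_boot.
Set Implicit Arguments. Unset Strict Implicit. Unset Printing Implicit Defensive.
Local Open Scope R_scope.

Definition sumR (I : finType) (F : I -> R) : R :=
  foldr Rplus R0 [seq F i | i <- enum I].

Definition meanR (N : nat) (x : 'I_N -> R) : R := sumR x / INR N.

(* Sample space of sampling m items without replacement from 'I_N:
   ordered m-tuples of distinct indices (injective maps 'I_m -> 'I_N),
   each equally likely. *)
Definition wor_space (N m : nat) : {set {ffun 'I_m -> 'I_N}} :=
  [set f : {ffun 'I_m -> 'I_N} | injectiveb f].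

Definition wor_prob (N m : nat) (E : pred {ffun 'I_m -> 'I_N}) : R :=
  INR #|[set f in wor_space N m | E f]| / INR #|wor_space N m|.

Definition dev_le (N m : nat) (x : 'I_N -> R) (eps : R)
  (f : {ffun 'I_m -> 'I_N}) : bool :=
  if Rle_dec (sumR (fun t : 'I_m => x (f t)) / INR m - meanR x) eps
  then true else false.

From Coquelicot Require Import Coquelicot.
From Stdlib Require Import Reals Lra.
From HB Require Import structures.
From mathcomp Require Import all_boot zify.
Set Implicit Arguments. Unset Strict Implicit. Unset Printing Implicit Defensive.
Open Scope R_scope.

(* A sample without replacement is as likely as its image set, so the
   probability in question is the proportion of m-subsets S of {1..N} with
   sum_S x <= m (mu + eps).  The exponential moments
   E_m(A) = sum_{S <= A, |S| = m} e^(lam sum_S x) satisfy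
   (m+1) E_(m+1)(A) = sum_{i in A} e^(lam x_i) E_m(A \ i), and Hoeffding's lemma
   for the uniform distribution on A turns this into Serfling's bound
   E_m(A) <= C(|A|, m) exp(lam m mu_A + lam^2 (b-a)^2 m (|A|-m+1) / (8 |A|)).
   Chernoff's method then bounds the proportion of bad m-subsets by
   exp(-2 m eps^2 / ((b-a)^2 (1 - (m-1)/N))).  The same bound for the
   complementary (N-m)-subsets and the values -x_i gives
   exp(-2 m^2 eps^2 N / ((b-a)^2 (N-m)(m+1))); the two conditions on m make
   the respective bound at most delta. *)

HB.instance Definition _ := Monoid.isComLaw.Build R 0 Rplus
  (fun x y z => esym (Rplus_assoc x y z)) Rplus_comm Rplus_0_l.
HB.instance Definition _ := Monoid.isComLaw.Build R 1 Rmult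
  (fun x y z => esym (Rmult_assoc x y z)) Rmult_comm Rmult_1_l.
HB.instance Definition _ := Monoid.isMulLaw.Build R 0 Rmult Rmult_0_l Rmult_0_r.
HB.instance Definition _ :=
  Monoid.isAddLaw.Build R Rmult Rplus Rmult_plus_distr_r Rmult_plus_distr_l.

Lemma rsum_le (I : finType) (P : pred I) (F G : I -> R) :
  (forall i, P i -> F i <= G i) -> \big[Rplus/0]_(i | P i) F i <= \big[Rplus/0]_(i | P i) G i.
Proof. by move=> FG; apply: (big_ind2 (fun x y => x <= y)) => // *; lra. Qed.

Lemma rsum_const (I : finType) (P : pred I) (c : R) :
  \big[Rplus/0]_(i | P i) c = INR #|P| * c.
Proof.
rewrite big_const; elim: #|P| => [|n IH] /=; first lra.
by rewrite IH; case: n {IH} => [|n] /=; lra.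
Qed.

Lemma sumR_bigop (I : finType) (F : I -> R) : sumR F = \big[Rplus/0]_(i | true) F i.
Proof. by rewrite /sumR -big_enum /= unlock /reducebig foldr_map. Qed.

Lemma exp_le x y : x <= y -> exp x <= exp y.
Proof. by case/Rle_lt_or_eq_dec => [/exp_increasing/Rlt_le | ->] //; lra. Qed.

Lemma is_derive_MVT (f df : R -> R) (a b : R) :
  (forall t, is_derive f t (df t)) ->
  exists c, Rmin a b <= c <= Rmax a b /\ f b - f a = df c * (b - a).
Proof.
move=> f_df; apply: MVT_gen => [t _ | t _]; first exact: f_df.
apply/continuity_pt_filterlim/ex_derive_continuous; eexists; exact: f_df.
Qed.

Lemma ge0_of_deriv2_ge0 (g g1 g2 : R -> R) (h : R) :
  (forall t, is_derive g t (g1 t)) -> (forall t, is_derive g1 t (g2 t)) ->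
  (forall t, 0 <= g2 t) -> g 0 = 0 -> g1 0 = 0 -> 0 <= g h.
Proof.
move=> dg dg1 g2_ge0 g0 g10.
have [c [c_in gc]] := is_derive_MVT 0 h dg.
have [d [_ g1c]] := is_derive_MVT 0 c dg1.
rewrite g0 in gc; rewrite g10 in g1c.
have ch_ge0 : 0 <= c * h by move: c_in; rewrite /Rmin /Rmax; case: Rle_dec => _; nra.
have := g2_ge0 d; nra.
Qed.

(* Hoeffding's lemma for a centred Bernoulli(p) variable, scaled by h. *)
Lemma bernoulli_mgf_le (p h : R) : 0 <= p <= 1 ->
  (1 - p) * exp (- (p * h)) + p * exp ((1 - p) * h) <= exp (h ^ 2 / 8).
Proof.
move=> p01.
pose D t := 1 - p + p * exp t.
have D_gt0 t : 0 < D t.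
  have := exp_pos t; rewrite /D.
  case: (Req_dec p 0) => [-> | p0] e_gt0; first lra.
  have : 0 < p * exp t by apply: Rmult_lt_0_compat; lra.
  lra.
pose g t := t ^ 2 / 8 + p * t - ln (D t).
pose g1 t := t / 4 + p - p * exp t / D t.
pose g2 t := / 4 - p * exp t * (1 - p) / D t ^ 2.
have dg t : is_derive g t (g1 t).
  have := D_gt0 t; rewrite /g /g1 /D => Dt; auto_derive; [lra | field; lra].
have dg1 t : is_derive g1 t (g2 t).
  have := D_gt0 t; rewrite /g1 /g2 /D => Dt; auto_derive; [lra | field; lra].
have g2_ge0 t : 0 <= g2 t.
  have Dt := D_gt0 t.
  have pe_ge0 : 0 <= p * exp t by apply: Rmult_le_pos; [lra | exact/Rlt_le/exp_pos].
  (* AM-GM: 4 y z <= (y + z)^2 with y = p e^t, z = 1 - p and y + z = D t *)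
  have amgm : p * exp t * (1 - p) / D t ^ 2 <= / 4.
    apply: (Rmult_le_reg_r (D t ^ 2)); first exact: pow_lt.
    rewrite /Rdiv Rmult_assoc Rinv_l; last by apply: pow_nonzero; lra.
    have := pow2_ge_0 (p * exp t - (1 - p)); rewrite /D; nra.
  rewrite /g2; lra.
have g_ge0 : 0 <= g h.
  apply: ge0_of_deriv2_ge0 dg dg1 g2_ge0 _ _;
    rewrite /g /g1 /D exp_0 (_ : 1 - p + p * 1 = 1) ?ln_1; by [field | ring].
have -> : (1 - p) * exp (- (p * h)) + p * exp ((1 - p) * h) = exp (- (p * h)) * D h.
  rewrite /D (_ : (1 - p) * h = - (p * h) + h) ?exp_plus; ring.
rewrite -{1}(exp_ln (D h)) // -exp_plus; apply: exp_le.
move: g_ge0; rewrite /g; lra.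
Qed.

Lemma exp_le_chord (a b y s : R) : a < b -> a <= y <= b ->
  exp (s * y) <= ((b - y) * exp (s * a) + (y - a) * exp (s * b)) / (b - a).
Proof.
move=> ab y_ab.
have tangent z : exp (s * y) * (1 + (s * z - s * y)) <= exp (s * z).
  rewrite (_ : s * z = s * y + (s * z - s * y)); last ring.
  rewrite exp_plus (_ : s * y + (s * z - s * y) - s * y = s * z - s * y); last ring.
  apply: Rmult_le_compat_l; [exact/Rlt_le/exp_pos | exact: exp_ineq1_le].
apply: (Rmult_le_reg_r (b - a)); first lra.
rewrite /Rdiv Rmult_assoc Rinv_l ?Rmult_1_r; last lra.
have ta := tangent a; have tb := tangent b.
have : (b - y) * (exp (s * y) * (1 + (s * a - s * y))) <= (b - y) * exp (s * a).
  by apply: Rmult_le_compat_l; lra.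
have : (y - a) * (exp (s * y) * (1 + (s * b - s * y))) <= (y - a) * exp (s * b).
  by apply: Rmult_le_compat_l; lra.
nra.
Qed.

Lemma hoeffding_two_point (a b mu s : R) : a < b -> a <= mu <= b ->
  ((b - mu) * exp (s * (a - mu)) + (mu - a) * exp (s * (b - mu))) / (b - a)
  <= exp (s ^ 2 * (b - a) ^ 2 / 8).
Proof.
move=> ab mu_ab.
have p01 : 0 <= (mu - a) / (b - a) <= 1.
  split; first by apply: Rmult_le_pos; [lra | apply/Rlt_le/Rinv_0_lt_compat; lra].
  apply: (Rmult_le_reg_r (b - a)); first lra.
  rewrite /Rdiv Rmult_assoc Rinv_l; lra.
have := bernoulli_mgf_le (s * (b - a)) p01.
have -> : - ((mu - a) / (b - a) * (s * (b - a))) = s * (a - mu) by field; lra.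
have -> : (1 - (mu - a) / (b - a)) * (s * (b - a)) = s * (b - mu) by field; lra.
have -> : (s * (b - a)) ^ 2 / 8 = s ^ 2 * (b - a) ^ 2 / 8 by field.
rewrite (_ : 1 - (mu - a) / (b - a) = (b - mu) / (b - a)); last by field; lra.
by apply: Rle_trans; right; field; lra.
Qed.

(* m (1 - (m - 1) / n): Serfling's variance proxy for a sum of m draws without replacement. *)
Definition serfling_factor (n m : R) := m * (n - m + 1) / n.

Lemma serfling_factor_gt0 (n m : R) : 0 < m < n -> 0 < serfling_factor n m.
Proof.
move=> m_n; rewrite /serfling_factor /Rdiv.
by apply: Rmult_lt_0_compat; [apply: Rmult_lt_0_compat | apply: Rinv_0_lt_compat]; lra.
Qed.

Lemma serfling_factor_step (n m : R) : 0 <= m -> m + 2 <= n ->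
  serfling_factor (n - 1) m + ((n - 1 - m) / (n - 1)) ^ 2 <= serfling_factor n (m + 1).
Proof.
move=> m_ge0 mn; rewrite /serfling_factor.
have -> : (m + 1) * (n - (m + 1) + 1) / n = m * (n - 1 - m + 1) / (n - 1)
  + ((n - 1 - m) / (n - 1)) ^ 2 + m * (n - 1 - m) / (n * (n - 1) ^ 2) by field; lra.
have : 0 <= m * (n - 1 - m) / (n * (n - 1) ^ 2).
  apply: Rmult_le_pos; first nra.
  apply/Rlt_le/Rinv_0_lt_compat/Rmult_lt_0_compat; [lra | apply: pow_lt; lra].
lra.
Qed.

Lemma serfling_exponent_step (n m lam c : R) : 0 <= m -> m + 2 <= n -> 0 <= c ->
  lam ^ 2 * c * serfling_factor (n - 1) m / 8 + (lam * (n - 1 - m) / (n - 1)) ^ 2 * c / 8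
  <= lam ^ 2 * c * serfling_factor n (m + 1) / 8.
Proof.
move=> m_ge0 mn c_ge0.
rewrite (_ : lam ^ 2 * c * serfling_factor (n - 1) m / 8 + _ = lam ^ 2 * c / 8 *
  (serfling_factor (n - 1) m + ((n - 1 - m) / (n - 1)) ^ 2)); last by field; lra.
rewrite (_ : lam ^ 2 * c * serfling_factor n (m + 1) / 8
  = lam ^ 2 * c / 8 * serfling_factor n (m + 1)); last by field.
apply: Rmult_le_compat_l; last exact: serfling_factor_step.
by have := pow2_ge_0 lam; nra.
Qed.

Lemma serfling_size_direct (n m u : R) : 0 < n -> 0 <= u ->
  m >= (u + u / n) / (1 + u / n) -> u * serfling_factor n m <= m ^ 2.
Proof.
move=> n_gt0 u_ge0 /Rge_le /Rle_div_l m_ge.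
have {}m_ge : u * (n + 1) <= m * (n + u).
  have un_ge0 : 0 <= u / n by apply: Rmult_le_pos; [lra | exact/Rlt_le/Rinv_0_lt_compat].
  have := Rmult_le_compat_r n _ _ (Rlt_le _ _ n_gt0) (m_ge ltac:(lra)).
  rewrite (_ : (u + u / n) * n = u * (n + 1)); last by field; lra.
  by rewrite (_ : m * (1 + u / n) * n = m * (n + u)); last by field; lra.
have m_ge0 : 0 <= m by nra.
apply: (Rmult_le_reg_r n) => //; rewrite /serfling_factor.
rewrite (_ : u * (m * (n - m + 1) / n) * n = m * (u * (n - m + 1))); last by field; lra.
nra.
Qed.

Lemma serfling_size_complement (n m u : R) : 0 < n -> 0 <= u ->
  m >= (u + 1) / (1 + u / n) -> u * serfling_factor n (n - m) <= m ^ 2.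
Proof.
move=> n_gt0 u_ge0 /Rge_le /Rle_div_l m_ge.
have {}m_ge : (u + 1) * n <= m * (n + u).
  have un_ge0 : 0 <= u / n by apply: Rmult_le_pos; [lra | exact/Rlt_le/Rinv_0_lt_compat].
  have := Rmult_le_compat_r n _ _ (Rlt_le _ _ n_gt0) (m_ge ltac:(lra)).
  by rewrite (_ : m * (1 + u / n) * n = m * (n + u)); last by field; lra.
have m_ge0 : 0 <= m by nra.
apply: (Rmult_le_reg_r n) => //; rewrite /serfling_factor.
rewrite (_ : u * ((n - m) * (n - (n - m) + 1) / n) * n = u * (n - m) * (m + 1));
  last by field; lra.
have : 0 <= (m + 1) * (m * (n + u) - (u + 1) * n) by apply: Rmult_le_pos; lra.
nra.
Qed.

Section SubsetCount.
Variable T : finType.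

Definition subset_count (k : nat) (P : pred {set T}) : R :=
  \big[Rplus/0]_(S : {set T} | #|S| == k) (if P S then 1 else 0).

Lemma subset_count_predT (k : nat) : subset_count k predT = INR 'C(#|T|, k).
Proof.
rewrite /subset_count rsum_const Rmult_1_r -card_draws.
by congr INR; apply: eq_card => S; rewrite inE.
Qed.

Lemma eq_subset_count k (P Q : pred {set T}) :
  P =1 Q -> subset_count k P = subset_count k Q.
Proof. by move=> PQ; apply: eq_bigr => S _; rewrite PQ. Qed.

Lemma subset_countC k (P : pred {set T}) :
  subset_count k (fun S => ~~ P S) = INR 'C(#|T|, k) - subset_count k P.
Proof.
rewrite -subset_count_predT.
have : subset_count k P + subset_count k (fun S => ~~ P S) = subset_count k predT.
  by rewrite /subset_count -big_split; apply: eq_bigr => S _ /=; case: (P S) => /=; ring.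
lra.
Qed.

Lemma subset_count_setC (k : nat) (P : pred {set T}) : (k <= #|T|)%N ->
  subset_count k P = subset_count (#|T| - k) (fun S => P (~: S)).
Proof.
move=> kT; rewrite /subset_count (reindex_inj (@setC_inj T)) /=.
apply: eq_bigl => S; have := cardsC S => cardT.
by rewrite -cardT in kT *; apply/eqP/eqP; lia.
Qed.

End SubsetCount.

Section SubsetSums.
Variables (T : finType) (x : T -> R).

Definition ssum (S : {set T}) := \big[Rplus/0]_(i in S) x i.
Definition smean (S : {set T}) := ssum S / INR #|S|.

Lemma ssum_setU1 (i : T) (S : {set T}) : i \notin S -> ssum (i |: S) = x i + ssum S.
Proof. by move=> iS; rewrite /ssum big_setU1. Qed.

Lemma ssum_setD1 (i : T) (A : {set T}) : i \in A -> ssum (A :\ i) = ssum A - x i.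
Proof. by move=> iA; rewrite -{2}(setD1K iA) ssum_setU1 ?setD11 //; ring. Qed.

Lemma ssum_setC (S : {set T}) : ssum (~: S) = ssum setT - ssum S.
Proof. by rewrite /ssum (big_setID (A := setT) S) /= setTI setTD; ring. Qed.

Definition exceeds (k : nat) (t : R) (S : {set T}) : bool :=
  if Rlt_dec t (ssum S - INR k * smean setT) then true else false.

Variables a b : R.
Hypothesis ab : a < b.
Hypothesis x_ab : forall i, a <= x i <= b.

Lemma smean_bounds (A : {set T}) : (0 < #|A|)%N -> a <= smean A <= b.
Proof.
move=> A_gt0; have nA : INR #|A| > 0 by apply/lt_0_INR/ltP.
have : INR #|A| * a <= ssum A <= INR #|A| * b.
  by rewrite /ssum -!rsum_const; split; apply: rsum_le => i _; have := x_ab i; lra.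
by rewrite /smean; split; [apply/(Rle_div_r _ _ _ nA) | apply/(Rle_div_l _ _ _ nA)]; lra.
Qed.

Lemma hoeffding_uniform (A : {set T}) (s : R) : (0 < #|A|)%N ->
  \big[Rplus/0]_(i in A) exp (s * (x i - smean A))
  <= INR #|A| * exp (s ^ 2 * (b - a) ^ 2 / 8).
Proof.
move=> A_gt0; set E := exp _; set n := INR #|A|; have n_gt0 : 0 < n by apply/lt_0_INR/ltP.
set mu := smean A; have mu_ab := smean_bounds A_gt0.
have sum_A : ssum A = n * mu by rewrite /mu /smean -/n; field; lra.
set K1 := exp (s * (a - mu)); set K2 := exp (s * (b - mu)).
pose al := (b * K1 - a * K2) / (b - a); pose be := (K2 - K1) / (b - a).
apply: Rle_trans (_ : \big[Rplus/0]_(i in A) (al + be * x i) <= _).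
  apply: rsum_le => i _; have x_i := x_ab i.
  have := @exp_le_chord (a - mu) (b - mu) (x i - mu) s ltac:(lra) ltac:(lra).
  move/Rle_trans; apply; right; rewrite -/K1 -/K2 /al /be; field; lra.
rewrite big_split rsum_const -big_distrr -/(ssum A) -/n sum_A /=.
have := hoeffding_two_point s ab mu_ab; rewrite -/K1 -/K2 -/mu -/E => two_point.
rewrite (_ : n * al + be * (n * mu)
  = n * (((b - mu) * K1 + (mu - a) * K2) / (b - a))); last by rewrite /al /be; field; lra.
by apply: Rmult_le_compat_l; lra.
Qed.

Section ExpMoments.
Variable lam : R.

(* The elementary symmetric function of degree m of the e^(lam x_i), i in A. *)
Definition esym_exp (A : {set T}) (m : nat) : R :=
  \big[Rplus/0]_(S : {set T} | (S \subset A) && (#|S| == m)) exp (lam * ssum S).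

Lemma esym_exp0 (A : {set T}) : esym_exp A 0 = 1.
Proof.
rewrite /esym_exp (big_pred1 set0) => [|S]; last first.
  by rewrite /= cards_eq0; case: eqP => [->|]; rewrite ?sub0set ?andbF.
by rewrite /ssum big_set0 Rmult_0_r exp_0.
Qed.

Lemma esym_exp_rec (A : {set T}) (m : nat) :
  INR m.+1 * esym_exp A m.+1
  = \big[Rplus/0]_(i in A) (exp (lam * x i) * esym_exp (A :\ i) m).
Proof.
rewrite /esym_exp big_distrr /=.
transitivity (\big[Rplus/0]_(S : {set T} | (S \subset A) && (#|S| == m.+1))
                \big[Rplus/0]_(i in S) exp (lam * ssum S)).
  by apply: eq_bigr => S /andP [_ /eqP S_m]; rewrite rsum_const S_m.
rewrite (exchange_big_dep (fun i => i \in A)) /=; last first.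
  by move=> S i /andP [SA _]; apply: (subsetP SA).
apply: eq_bigr => i iA; rewrite big_distrr /=.
rewrite (reindex_onto (fun S => i |: S) (fun S => S :\ i)) /=; last first.
  by move=> S /andP [_ iS]; rewrite setD1K.
apply: eq_big => [S | S].
  have [iS | iS] := boolP (i \in S).
    have -> : ((i |: S) :\ i == S) = false.
      by apply/negbTE/eqP => S_eq; move: iS; rewrite -S_eq setD11.
    by rewrite subsetD1 iS !andbF.
  rewrite setU1K // subsetD1 iS andbT cardsU1 iS add1n eqSS setU11 andbT.
  by rewrite subUset sub1set iA eqxx andbT.
move=> /andP [_ /eqP S_eq]; have iS : i \notin S by rewrite -S_eq setD11.
by rewrite ssum_setU1 // Rmult_plus_distr_l exp_plus.
Qed.

Definition esym_exp_bound (A : {set T}) (m : nat) : R :=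
  INR 'C(#|A|, m) * exp (lam * INR m * smean A
    + lam ^ 2 * (b - a) ^ 2 * serfling_factor (INR #|A|) (INR m) / 8).

(* The mean of A :\ i is mu - (x_i - mu) / (n - 1), so the i-th term is
   e^(lam (m + 1) mu) e^(s (x_i - mu)) up to a constant, with
   s = lam (n - 1 - m) / (n - 1); Hoeffding's lemma on A controls the sum. *)
Lemma esym_exp_bound_rec (A : {set T}) (m : nat) : (m.+2 <= #|A|)%N ->
  \big[Rplus/0]_(i in A) (exp (lam * x i) * esym_exp_bound (A :\ i) m)
  <= INR m.+1 * esym_exp_bound A m.+1.
Proof.
move=> m_lt; set n := #|A|; have n_gt0 : (0 < n)%N by apply: leq_trans m_lt.
set nR := INR n; have m_ge0 := pos_INR m.
have m_lt' : INR m + 2 <= nR.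
  by rewrite /nR -(plus_INR m 2); apply/le_INR/leP; rewrite plusE addn2.
set mu := smean A.
have sum_A : ssum A = nR * mu by rewrite /mu /smean -/n -/nR; field; lra.
set Q := lam ^ 2 * (b - a) ^ 2 * serfling_factor (nR - 1) (INR m) / 8.
set s := lam * (nR - 1 - INR m) / (nR - 1).
set C := INR 'C(n.-1, m).
have term i : i \in A -> exp (lam * x i) * esym_exp_bound (A :\ i) m
    = C * exp Q * exp (lam * (INR m + 1) * mu) * exp (s * (x i - mu)).
  move=> iA; have card_Ai : #|A :\ i| = n.-1 by rewrite /n (cardsD1 i A) iA.
  have nR1 : INR n.-1 = nR - 1 by rewrite /nR -{2}(prednK n_gt0) S_INR; ring.
  rewrite /esym_exp_bound card_Ai /smean card_Ai ssum_setD1 // nR1 sum_A -/C -/Q.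
  transitivity (C * exp (lam * x i + (lam * INR m * ((nR * mu - x i) / (nR - 1)) + Q))).
    by rewrite [in RHS]exp_plus; ring.
  rewrite (_ : lam * x i + _ = Q + lam * (INR m + 1) * mu + s * (x i - mu)).
    by rewrite !exp_plus; ring.
  by rewrite /s; field; lra.
rewrite (eq_bigr _ term) -big_distrr.
apply: Rle_trans (Rmult_le_compat_l _ _ _ _ (hoeffding_uniform s _)) _.
- apply: Rmult_le_pos; last exact/Rlt_le/exp_pos.
  by apply: Rmult_le_pos; [exact: pos_INR | exact/Rlt_le/exp_pos].
- exact: n_gt0.
have bin_rec : INR m.+1 * INR 'C(n, m.+1) = nR * C.
  by rewrite -!mult_INR /nR /C; congr INR; rewrite !multE mul_bin_diag.
rewrite /esym_exp_bound -/n -/nR -/mu -[X in _ <= X]Rmult_assoc bin_rec S_INR.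
rewrite (_ : C * exp Q * exp (lam * (INR m + 1) * mu) * (nR * exp (s ^ 2 * (b - a) ^ 2 / 8))
  = nR * C * exp (lam * (INR m + 1) * mu + (Q + s ^ 2 * (b - a) ^ 2 / 8)));
  last by rewrite !exp_plus; ring.
apply: Rmult_le_compat_l; first by apply: Rmult_le_pos; [lra | exact: pos_INR].
apply/exp_le/Rplus_le_compat_l/serfling_exponent_step; [lra | lra | exact: pow2_ge_0].
Qed.

Lemma esym_exp_le (m : nat) (A : {set T}) : (m < #|A|)%N ->
  esym_exp A m <= esym_exp_bound A m.
Proof.
elim: m A => [|m IH] A m_lt.
  rewrite esym_exp0 /esym_exp_bound bin0 /serfling_factor /=.
  by rewrite (_ : _ + _ = 0) ?exp_0; [lra | rewrite /Rdiv; ring].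
apply: (Rmult_le_reg_l (INR m.+1)); first exact/lt_0_INR/ltP.
rewrite esym_exp_rec; apply: Rle_trans (esym_exp_bound_rec m_lt).
apply: rsum_le => i iA; apply: Rmult_le_compat_l; first exact/Rlt_le/exp_pos.
by apply: IH; rewrite (cardsD1 i A) iA in m_lt.
Qed.

End ExpMoments.

Lemma exceeds_count_le (k : nat) (t : R) : (0 < k)%N -> (k < #|T|)%N -> 0 < t ->
  subset_count k (exceeds k t)
  <= INR 'C(#|T|, k)
     * exp (- (2 * t ^ 2 / ((b - a) ^ 2 * serfling_factor (INR #|T|) (INR k)))).
Proof.
move=> k_gt0 k_lt t_gt0.
have B_gt0 : 0 < serfling_factor (INR #|T|) (INR k).
  by apply: serfling_factor_gt0; split; [apply/lt_0_INR/ltP | apply/lt_INR/ltP].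
set B := serfling_factor _ _ in B_gt0 *.
have c_gt0 : 0 < (b - a) ^ 2 by apply: pow_lt; lra.
(* lam minimises - lam t + lam^2 (b - a)^2 B / 8 *)
set lam := 4 * t / ((b - a) ^ 2 * B).
have lam_ge0 : 0 <= lam.
  rewrite /lam /Rdiv; apply: Rmult_le_pos; first lra.
  by apply/Rlt_le/Rinv_0_lt_compat; apply: Rmult_lt_0_compat.
set mu := smean setT.
apply: Rle_trans (_ : exp (- (lam * (INR k * mu + t))) * esym_exp lam setT k <= _).
  rewrite (_ : esym_exp lam setT k
    = \big[Rplus/0]_(S : {set T} | #|S| == k) exp (lam * ssum S)); last first.
    by apply: eq_bigl => S; rewrite subsetT.
  rewrite /subset_count big_distrr.
  apply: rsum_le => S _; rewrite /exceeds -/mu.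
  case: Rlt_dec => [exc | _] /=; rewrite -exp_plus; last exact/Rlt_le/exp_pos.
  rewrite -exp_0; apply: exp_le.
  have : 0 <= lam * (ssum S - INR k * mu - t) by apply: Rmult_le_pos; lra.
  lra.
have k_ltT : (k < #|[set: T]|)%N by rewrite cardsT.
apply: Rle_trans (Rmult_le_compat_l _ _ _ (Rlt_le _ _ (exp_pos _)) (esym_exp_le lam k_ltT)) _.
rewrite /esym_exp_bound cardsT -/mu -/B Rmult_comm Rmult_assoc -exp_plus.
apply: Rmult_le_compat_l; first exact: pos_INR.
by right; congr exp; rewrite /lam; field; split; lra.
Qed.

Lemma exceeds_count_le_delta (k : nat) (s eps delta : R) :
  (0 < k)%N -> (k < #|T|)%N -> 0 < s -> 0 < eps -> 0 < delta ->
  ln (1 / delta) / 2 * ((b - a) ^ 2 / eps ^ 2) * serfling_factor (INR #|T|) (INR k)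
    <= s ^ 2 ->
  subset_count k (exceeds k (s * eps)) <= delta * INR 'C(#|T|, k).
Proof.
move=> k_gt0 k_lt s_gt0 eps_gt0 delta_gt0 size_ok.
have B_gt0 : 0 < serfling_factor (INR #|T|) (INR k).
  by apply: serfling_factor_gt0; split; [apply/lt_0_INR/ltP | apply/lt_INR/ltP].
set B := serfling_factor _ _ in size_ok B_gt0 *.
have c_gt0 : 0 < (b - a) ^ 2 by apply: pow_lt; lra.
apply: Rle_trans (exceeds_count_le k_gt0 k_lt _) _; first nra.
rewrite -/B [delta * _]Rmult_comm.
apply: Rmult_le_compat_l; first exact: pos_INR.
rewrite -[X in _ <= X](exp_ln delta) //; apply/exp_le/Ropp_le_cancel; rewrite Ropp_involutive.
apply/(Rle_div_r _ _ _ (Rmult_lt_0_compat _ _ c_gt0 B_gt0)).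
rewrite (_ : ln (1 / delta) = - ln delta) in size_ok; last first.
  by rewrite /Rdiv Rmult_1_l ln_Rinv.
rewrite (_ : - ln delta * ((b - a) ^ 2 * B)
  = - ln delta / 2 * ((b - a) ^ 2 / eps ^ 2) * B * (2 * eps ^ 2)); last by field; lra.
have : 0 <= (s ^ 2 - - ln delta / 2 * ((b - a) ^ 2 / eps ^ 2) * B) * (2 * eps ^ 2).
  by apply: Rmult_le_pos; [lra | have := pow2_ge_0 eps; lra].
nra.
Qed.

End SubsetSums.

Lemma ssum_opp (T : finType) (x : T -> R) (S : {set T}) :
  ssum (fun i => - x i) S = - ssum x S.
Proof. by rewrite /ssum (big_morph Ropp Ropp_plus_distr Ropp_0). Qed.

Lemma exceeds_setC (T : finType) (x : T -> R) (k : nat) (t : R) (S : {set T}) :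
  (k < #|T|)%N -> exceeds x k t (~: S) = exceeds (fun i => - x i) (#|T| - k) t S.
Proof.
move=> k_lt; have n_gt0 : 0 < INR #|T| by apply/lt_0_INR/ltP; apply: leq_trans k_lt.
rewrite /exceeds /smean cardsT ssum_setC !ssum_opp minus_INR; last exact/leP/ltnW.
by rewrite (_ : ssum x setT - ssum x S - INR k * (ssum x setT / INR #|T|)
  = - ssum x S - (INR #|T| - INR k) * (- ssum x setT / INR #|T|)); last by field; lra.
Qed.

Lemma exceeds_count_le_delta_setC (T : finType) (x : T -> R) (a b : R) (k : nat)
    (s eps delta : R) :
  a < b -> (forall i, a <= x i <= b) ->
  (0 < k)%N -> (k < #|T|)%N -> 0 < s -> 0 < eps -> 0 < delta ->
  ln (1 / delta) / 2 * ((b - a) ^ 2 / eps ^ 2)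
    * serfling_factor (INR #|T|) (INR #|T| - INR k) <= s ^ 2 ->
  subset_count k (exceeds x k (s * eps)) <= delta * INR 'C(#|T|, k).
Proof.
move=> ab x_ab k_gt0 k_lt s_gt0 eps_gt0 delta_gt0 size_ok.
have neg_x_ab i : - b <= - x i <= - a by have := x_ab i; lra.
rewrite (subset_count_setC _ (ltnW k_lt)) -(bin_sub (ltnW k_lt)).
rewrite (eq_subset_count _ (fun S => exceeds_setC x (s * eps) S k_lt)).
apply: (@exceeds_count_le_delta _ _ (- b) (- a)); try lra.
- exact: neg_x_ab.
- by rewrite subn_gt0.
- by rewrite ltn_subrL k_gt0 (ltn_trans k_gt0 k_lt).
- rewrite minus_INR; last exact/leP/ltnW.
  by rewrite (_ : - a - - b = b - a); last ring.
Qed.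

Lemma card_inj_ffun_imset (T : finType) (m : nat) (S : {set T}) : #|S| = m ->
  #|[pred f : {ffun 'I_m -> T} | injectiveb f && (f @: 'I_m == S)]| = m`!.
Proof.
move=> S_m; rewrite -ffactnn.
have := @card_inj_ffuns_on 'I_m T (mem S); rewrite card_ord S_m => <-.
apply: eq_card => f; rewrite !inE.
apply/andP/andP => [[/injectiveP f_inj /eqP f_im] | [/ffun_onP f_on /injectiveP f_inj]].
  split; last exact/injectiveP.
  by apply/ffun_onP => i; rewrite -f_im imset_f.
split; first exact/injectiveP.
rewrite eqEcard card_imset // card_ord S_m leqnn andbT.
by apply/subsetP => y /imsetP [i _ ->]; apply: f_on.
Qed.

Lemma sum_inj_ffun_imset (T : finType) (m : nat) (w : {set T} -> R) :
  \big[Rplus/0]_(f : {ffun 'I_m -> T} | injectiveb f) w (f @: 'I_m)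
  = INR m`! * \big[Rplus/0]_(S : {set T} | #|S| == m) w S.
Proof.
rewrite (partition_big (fun f : {ffun 'I_m -> T} => f @: 'I_m)
  (fun S : {set T} => #|S| == m)) /=; last first.
  by move=> f /injectiveP f_inj; rewrite card_imset // card_ord.
rewrite big_distrr; apply: eq_bigr => S /eqP S_m.
rewrite (eq_bigr (fun _ => w S)); last by move=> f /andP [_ /eqP ->].
by rewrite rsum_const card_inj_ffun_imset // Rmult_comm.
Qed.

(* Each m-subset is the image of exactly m! injections. *)
Lemma wor_prob_imset (N m : nat) (E : pred {ffun 'I_m -> 'I_N}) (P : pred {set 'I_N}) :
  (m <= N)%N ->
  (forall f : {ffun 'I_m -> 'I_N}, injectiveb f -> E f = P (f @: 'I_m)) ->
  wor_prob E = subset_count m P / INR 'C(N, m).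
Proof.
move=> m_le E_P.
have card_event E' P' :
    (forall f : {ffun 'I_m -> 'I_N}, injectiveb f -> E' f = P' (f @: 'I_m)) ->
    INR #|[set f in wor_space N m | E' f]| = INR m`! * subset_count m P'.
  move=> E'_P'; rewrite /subset_count -sum_inj_ffun_imset -big_mkcondr.
  rewrite -[LHS]Rmult_1_r -rsum_const; apply: eq_bigl => f.
  rewrite [LHS]in_set !inE.
  by case/boolP: (injectiveb f) => // /E'_P'.
rewrite /wor_prob (card_event _ _ E_P).
rewrite (_ : wor_space N m = [set f in wor_space N m | predT f]).
  rewrite (card_event _ predT) // subset_count_predT card_ord.
  have : 0 < INR m`! by apply/lt_0_INR/ltP/fact_gt0.
  have : 0 < INR 'C(N, m) by apply/lt_0_INR/ltP; rewrite bin_gt0.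
  by set X := subset_count m P => *; field; lra.
by apply/setP => f; rewrite !inE andbT.
Qed.

Lemma dev_le_imset (N m : nat) (x : 'I_N -> R) (eps : R) (f : {ffun 'I_m -> 'I_N}) :
  (0 < m)%N -> injectiveb f ->
  dev_le x eps f = ~~ exceeds x m (INR m * eps) (f @: 'I_m).
Proof.
move=> m_gt0 /injectiveP f_inj; have m_pos : 0 < INR m by apply/lt_0_INR/ltP.
have sum_f : sumR (fun t => x (f t)) = ssum x (f @: 'I_m).
  by rewrite sumR_bigop /ssum big_imset => [|i j _ _ /f_inj]; [apply: eq_bigl|].
have mean_x : meanR x = smean x setT.
  rewrite /meanR /smean sumR_bigop cardsT card_ord.
  by congr (_ / _); apply: eq_bigl => i; rewrite inE.
rewrite /dev_le /exceeds sum_f -mean_x.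
set d := ssum x _ - INR m * meanR x.
rewrite (_ : ssum x _ / INR m - meanR x = d / INR m); last by rewrite /d; field; lra.
case: Rle_dec => [le_d | gt_d]; case: Rlt_dec => [lt_d | ge_d] //=.
- by move/(Rle_div_l _ _ _ m_pos): le_d; lra.
- by case: gt_d; apply/(Rle_div_l _ _ _ m_pos); lra.
Qed.

Lemma wor_prob_dev_le (N m : nat) (x : 'I_N -> R) (eps : R) : (0 < m)%N -> (m <= N)%N ->
  @wor_prob N m (@dev_le N m x eps)
  = 1 - subset_count m (exceeds x m (INR m * eps)) / INR 'C(N, m).
Proof.
move=> m_gt0 m_le.
rewrite (@wor_prob_imset _ _ _ (fun S => ~~ exceeds x m (INR m * eps) S) m_le);
  last by move=> f; exact: dev_le_imset.
rewrite subset_countC card_ord.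
have : 0 < INR 'C(N, m) by apply/lt_0_INR/ltP; rewrite bin_gt0.
by set c := subset_count _ _ => C_gt0; field; lra.
Qed.

Theorem lemma1 (N : nat) (a b : R) (x : 'I_N -> R) (eps delta : R) (m : nat) :
  (1 < N)%N -> a < b ->
  (forall i : 'I_N, a <= x i <= b) ->
  0 < eps < 1 -> 0 < delta < 1 ->
  (1 <= m)%N -> (m < N)%N ->
  let u := ln (1 / delta) / 2 * ((b - a) ^ 2 / eps ^ 2) in
  INR m >= Rmin ((u + 1) / (1 + u / INR N)) ((u + u / INR N) / (1 + u / INR N)) ->
  @wor_prob N m (@dev_le N m x eps) >= 1 - delta.
Proof.
move=> N_gt1 ab x_ab eps01 delta01 m_gt0 m_lt u m_ge.
have N_pos : 0 < INR N by apply/lt_0_INR/ltP/ltnW.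
have m_ltT : (m < #|'I_N|)%N by rewrite card_ord.
have u_ge0 : 0 <= u.
  have : 0 < ln (1 / delta).
    by rewrite -ln_1; apply: ln_increasing; [lra | apply/(Rlt_div_r _ _ _ (proj1 delta01)); lra].
  have : 0 <= (b - a) ^ 2 / eps ^ 2.
    by apply: Rmult_le_pos; [exact: pow2_ge_0 | apply/Rlt_le/Rinv_0_lt_compat/pow_lt; lra].
  by rewrite /u /Rdiv; nra.
have bad_le : subset_count m (exceeds x m (INR m * eps)) <= delta * INR 'C(#|'I_N|, m).
  have m_pos : 0 < INR m by apply/lt_0_INR/ltP.
  move: m_ge; rewrite /Rmin; case: Rle_dec => _ m_ge.
  - apply: (exceeds_count_le_delta_setC ab x_ab m_gt0 m_ltT); try lra.
    by rewrite card_ord -/u; exact: serfling_size_complement.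
  - apply: (exceeds_count_le_delta ab x_ab m_gt0 m_ltT); try lra.
    by rewrite card_ord -/u; exact: serfling_size_direct.
rewrite card_ord in bad_le; rewrite wor_prob_dev_le ?(ltnW m_lt) //; apply: Rle_ge.
have : 0 < INR 'C(N, m) by apply/lt_0_INR/ltP; rewrite bin_gt0 ltnW.
by move=> C_gt0; apply: Rplus_le_compat_l; apply/Ropp_le_contravar/(Rle_div_l _ _ _ C_gt0).
Qed.
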